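(* Let $G=(V,A)$ be a directed multigraph, $T^+,T^-\subseteq V$ disjoint, $T=T^+\cup T^-$, and let $k\in\mathbb{N}$, $k\geq1$. Then the family $$\mathcal X_k:=\{X\subseteq T:\ \text{there are disjoint } X\text{-cuts } S_1,\dots,S_k\in 2^V\}$$ is closed under set union and set intersection.
   Context: For $S\subseteq V$, $\delta(S)$ is the set of arcs with one endpoint in $S$ and the other in $V\setminus S$ (either direction). For $X\subseteq T$, sets $S_1,\dots,S_k\subseteq V$ are called disjoint $X$-cuts if $S_1\subseteq S_2\subseteq\dots\subseteq S_k$, each $S_i$ satisfies $X\cap T^+\subseteq S_i$ and $T^-\setminus X\subseteq V\setminus S_i$, and $\delta(S_i)\cap\delta(S_j)=\emptyset$ for all $i\ne j$. *)

From mathcomp Require Import all_boot.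
Set Implicit Arguments. Unset Strict Implicit. Unset Printing Implicit Defensive.

(* A finite directed multigraph G = (V, A): arcs are elements of the finite
   type A, arc a goes from [tail a] to [head a]; parallel arcs and loops allowed. *)

Section Cuts.
Variables (V A : finType) (tail head : A -> V).

Definition delta (S : {set V}) : {set A} :=
  [set a | (tail a \in S) != (head a \in S)].

Definition disjoint_Xcuts (Tp Tm X : {set V}) (k : nat) (S : 'I_k -> {set V}) : Prop :=
  [/\ (forall i j : 'I_k, (i <= j)%N -> S i \subset S j),
      (forall i : 'I_k, X :&: Tp \subset S i),
      (forall i : 'I_k, Tm :\: X \subset ~: S i)
    & (forall i j : 'I_k, i != j -> delta (S i) :&: delta (S j) = set0)].

Definition in_Xk (Tp Tm : {set V}) (k : nat) (X : {set V}) : Prop :=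
  X \subset Tp :|: Tm /\ exists S : 'I_k -> {set V}, disjoint_Xcuts Tp Tm X S.

End Cuts.

From mathcomp Require Import all_boot.

(* For a nested chain S_1 ⊆ ... ⊆ S_k, the cuts delta(S_i) are pairwise
   disjoint exactly when, for i < j, every arc with an endpoint in S_i has its
   other endpoint in S_j.  This condition is a conjunction of Horn clauses in
   the memberships, so it survives taking pointwise unions and pointwise
   intersections of two chains; the terminal conditions of X-cuts are
   preserved by plain set algebra. *)

Set Implicit Arguments.
Unset Strict Implicit.
Unset Printing Implicit Defensive.

Section DisjointCuts.
Variables (V A : finType) (tail head : A -> V).

Local Notation delta := (delta tail head).

Definition arc_closed (S S' : {set V}) : Prop :=
  forall a, (tail a \in S -> head a \in S') /\ (head a \in S -> tail a \in S').

Lemma arc_closedU S1 S1' S2 S2' :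
  arc_closed S1 S1' -> arc_closed S2 S2' -> arc_closed (S1 :|: S2) (S1' :|: S2').
Proof.
move=> cl1 cl2 a; have [t1 h1] := cl1 a; have [t2 h2] := cl2 a.
by rewrite !inE; split=> [/orP[/t1|/t2] | /orP[/h1|/h2]] ->; rewrite ?orbT.
Qed.

Lemma arc_closedI S1 S1' S2 S2' :
  arc_closed S1 S1' -> arc_closed S2 S2' -> arc_closed (S1 :&: S2) (S1' :&: S2').
Proof.
move=> cl1 cl2 a; have [t1 h1] := cl1 a; have [t2 h2] := cl2 a.
by rewrite !inE; split=> [/andP[/t1 -> /t2 ->] | /andP[/h1 -> /h2 ->]].
Qed.

Lemma nested_delta_disjointP (S S' : {set V}) :
  S \subset S' -> delta S :&: delta S' = set0 <-> arc_closed S S'.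
Proof.
move=> /subsetP sSS'.
suff arcP a : a \notin delta S :&: delta S' <->
              (tail a \in S -> head a \in S') /\ (head a \in S -> tail a \in S').
  split=> [/setP dis a | cl]; first by apply/arcP; rewrite dis in_set0.
  by apply/setP=> a; rewrite in_set0; apply: negbTE; apply/arcP/cl.
move: (sSS' (tail a)) (sSS' (head a)); rewrite !inE.
by case: (tail a \in S); case: (head a \in S);
   case: (tail a \in S'); case: (head a \in S'); intuition.
Qed.

Variable k : nat.

Definition nested (S : 'I_k -> {set V}) : Prop :=
  forall i j : 'I_k, (i <= j)%N -> S i \subset S j.

Definition deltas_disjoint (S : 'I_k -> {set V}) : Prop :=
  forall i j : 'I_k, i != j -> delta (S i) :&: delta (S j) = set0.

Definition chain_arc_closed (S : 'I_k -> {set V}) : Prop :=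
  forall i j : 'I_k, (i < j)%N -> arc_closed (S i) (S j).

Lemma nested_deltas_disjointP S :
  nested S -> deltas_disjoint S <-> chain_arc_closed S.
Proof.
move=> nS; split=> [dis i j lt_ij | cl].
  by apply/nested_delta_disjointP; [apply/nS/ltnW | apply/dis; rewrite neq_ltn lt_ij].
suff dis_lt (i j : 'I_k) : (i < j)%N -> delta (S i) :&: delta (S j) = set0.
  by move=> i j; rewrite neq_ltn => /orP[/dis_lt | /dis_lt]; rewrite // setIC.
by move=> lt_ij; apply/nested_delta_disjointP; [apply/nS/ltnW | apply: cl].
Qed.

Variables Tp Tm : {set V}.

Lemma disjoint_XcutsU X Y (S R : 'I_k -> {set V}) :
  disjoint_Xcuts tail head Tp Tm X S -> disjoint_Xcuts tail head Tp Tm Y R ->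
  disjoint_Xcuts tail head Tp Tm (X :|: Y) (fun i => S i :|: R i).
Proof.
move=> [nS XS SX /(nested_deltas_disjointP nS) clS].
move=> [nR YR RY /(nested_deltas_disjointP nR) clR].
have nSR : nested (fun i => S i :|: R i) by move=> i j le_ij; apply: setUSS; [apply: nS | apply: nR].
split=> // [i | i |].
- by rewrite setIUl setUSS.
- by rewrite setDUr setCU setISS.
apply/nested_deltas_disjointP => // i j lt_ij.
exact: arc_closedU (clS i j lt_ij) (clR i j lt_ij).
Qed.

Lemma disjoint_XcutsI X Y (S R : 'I_k -> {set V}) :
  disjoint_Xcuts tail head Tp Tm X S -> disjoint_Xcuts tail head Tp Tm Y R ->
  disjoint_Xcuts tail head Tp Tm (X :&: Y) (fun i => S i :&: R i).
Proof.
move=> [nS XS SX /(nested_deltas_disjointP nS) clS].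
move=> [nR YR RY /(nested_deltas_disjointP nR) clR].
have nSR : nested (fun i => S i :&: R i) by move=> i j le_ij; apply: setISS; [apply: nS | apply: nR].
split=> // [i | i |].
- by rewrite setIIl setISS.
- by rewrite setDIr setCI setUSS.
apply/nested_deltas_disjointP => // i j lt_ij.
exact: arc_closedI (clS i j lt_ij) (clR i j lt_ij).
Qed.

Lemma in_XkU X Y : in_Xk tail head Tp Tm k X -> in_Xk tail head Tp Tm k Y ->
  in_Xk tail head Tp Tm k (X :|: Y).
Proof.
move=> [XT [S cutS]] [YT [R cutR]]; split; first by rewrite subUset XT.
by exists (fun i => S i :|: R i); apply: disjoint_XcutsU.
Qed.

Lemma in_XkI X Y : in_Xk tail head Tp Tm k X -> in_Xk tail head Tp Tm k Y ->
  in_Xk tail head Tp Tm k (X :&: Y).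
Proof.
move=> [XT [S cutS]] [YT [R cutR]]; split; first exact: subset_trans (subsetIl X Y) XT.
by exists (fun i => S i :&: R i); apply: disjoint_XcutsI.
Qed.

End DisjointCuts.

Theorem lemma4 (V A : finType) (tail head : A -> V) (Tp Tm : {set V})
  (HT : [disjoint Tp & Tm]) (k : nat) (Hk : (1 <= k)%N) (X Y : {set V}) :
  in_Xk tail head Tp Tm k X -> in_Xk tail head Tp Tm k Y ->
  in_Xk tail head Tp Tm k (X :|: Y) /\ in_Xk tail head Tp Tm k (X :&: Y).
Proof. by move=> inX inY; split; [apply: in_XkU | apply: in_XkI]. Qed.
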